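(* Fix $\varepsilon>0$. Let $G^p_n$ be drawn from $G(n,n,p)$ with $p=\omega(n^{-1/2}\log^{1/2} n)$, and let $i_t(G^p_n)$ denote the number of independent sets of size $t$ in $G^p_n$. Then with probability tending to $1$ as $n\to\infty$, the sequence $(i_t(G^p_n))_{t=[\varepsilon n]}^{n}$ is unimodal with mode $n/2$, and moreover is log-concave.
   Context: $G(n,n,p)$ is the probability distribution on bipartite graphs with a fixed bipartition $\mathcal{E}\cup\mathcal{O}$, $|\mathcal{E}|=|\mathcal{O}|=n$, in which each of the $n^2$ pairs in $\mathcal{E}\times\mathcal{O}$ is an edge independently with probability $p=p(n)$. $p=\omega(f(n))$ means $p/f(n)\to\infty$. A sequence $(a_t)_{t=m}^{n}$ is unimodal with mode $k$ if $a_m\le\dots\le a_k\ge\dots\ge a_n$; it is log-concave if $a_k^2\ge a_{k-1}a_{k+1}$ for all $m<k<n$. $[y]$ denotes the integer part of $y$. *)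

From HB Require Import structures.
From mathcomp Require Import all_boot all_order all_algebra.
From mathcomp Require Import all_classical all_reals all_analysis.
Set Implicit Arguments. Unset Strict Implicit. Unset Printing Implicit Defensive.
Import Order.TTheory GRing.Theory Num.Theory.
Local Open Scope ring_scope.

(* A bipartite graph on E = 'I_n (even side) and O = 'I_n (odd side):
   g (i, j) = true iff {E_i, O_j} is an edge. *)
Definition bigraph (n : nat) := {ffun 'I_n * 'I_n -> bool}.

Definition gnnp_weight (R : realType) (n : nat) (p : R) (g : bigraph n) : R :=
  \prod_(e : 'I_n * 'I_n) (if g e then p else 1 - p).

Definition gnnp_prob (R : realType) (n : nat) (p : R) (P : pred (bigraph n)) : R :=
  \sum_(g : bigraph n | P g) gnnp_weight p g.

(* A vertex set is a pair (A, B), A subset of E, B subset of O; it is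
   independent iff no edge joins a vertex of A to a vertex of B. *)
Definition indep_set (n : nat) (g : bigraph n) (S : {set 'I_n} * {set 'I_n}) : bool :=
  [forall i in S.1, forall j in S.2, ~~ g (i, j)].

Definition num_indep (n : nat) (g : bigraph n) (t : nat) : nat :=
  #|[set S : {set 'I_n} * {set 'I_n} | indep_set g S && (#|S.1| + #|S.2| == t)%N]|.

Definition unimodal_mode (a : nat -> nat) (m N k : nat) : Prop :=
  (forall t, (m <= t)%N -> (t < k)%N -> (a t <= a t.+1)%N) /\
  (forall t, (m <= t)%N -> (k <= t)%N -> (t < N)%N -> (a t.+1 <= a t)%N).

Definition log_concave (a : nat -> nat) (m N : nat) : Prop :=
  forall k, (m < k)%N -> (k < N)%N -> (a k.-1 * a k.+1 <= a k ^ 2)%N.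

(* For t > 0 an independent set of size t either lies in one side
   of the bipartition (there are 2 C(n,t) of these) or meets both sides; with X_t
   the number of the latter, i_t = 2 C(n,t) + X_t.  A two-sided set (A, B) with
   |A| <= |B| and |A| + |B| = t >= m := [eps n] is independent with probability
   (1-p)^(|A||B|) <= ((1-p)^(m/2))^|A|, while C(n,|A|) C(n,|B|) <= n^(2|A|) C(n,t);
   hence E X_t <= (n+1)^2 n^2 (1-p)^(m/2) C(n,t).  As p >= 20 ln n / (eps n)
   eventually, this is O(n^-6) C(n,t), so by Markov's inequality and a union bound
   over t, with high probability n X_t <= C(n,t) for every t >= m.  Such a
   perturbation of 2 C(n,t) stays unimodal with mode [n/2] or [(n+1)/2] and
   log-concave: away from the middle the ratios of consecutive binomials differ
   from 1 by a factor at least 1 + 1/n, and at the middle the binomials coincide. *)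

From HB Require Import structures.
From mathcomp Require Import all_boot all_order all_algebra.
From mathcomp Require Import all_classical all_reals all_analysis.
From mathcomp Require Import zify ring lra.
Import Order.TTheory GRing.Theory Num.Theory.
Set Implicit Arguments. Unset Strict Implicit. Unset Printing Implicit Defensive.

Local Open Scope nat_scope.

Lemma perturbed_bin_up (n t x y : nat) : n * x <= 'C(n, t) -> t.*2.+2 <= n ->
  2 * 'C(n, t) + x <= 2 * 'C(n, t.+1) + y.
Proof.
move=> hx ht; have binS := mul_bin_left n t.
suff : t.+1 * (2 * 'C(n, t) + x) <= t.+1 * (2 * 'C(n, t.+1)).
  by rewrite leq_pmul2l //; lia.
have : t.+1 * x <= 'C(n, t) by apply: leq_trans hx; apply: leq_mul; lia.
nia.
Qed.

Lemma perturbed_bin_down (n t x y : nat) : n * y <= 'C(n, t.+1) -> n <= t.*2 -> t < n ->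
  2 * 'C(n, t.+1) + y <= 2 * 'C(n, t) + x.
Proof.
move=> hy ht tn; have binS := mul_bin_left n t.
suff : (n - t) * (2 * 'C(n, t.+1) + y) <= (n - t) * (2 * 'C(n, t)).
  by rewrite leq_pmul2l; lia.
have : (n - t) * y <= 'C(n, t.+1) by apply: leq_trans hy; apply: leq_mul; lia.
nia.
Qed.

Lemma perturbed_bin_log_concave_step (n k xm x xp : nat) : 0 < k -> k < n ->
  n * xm <= 'C(n, k.-1) -> n * xp <= 'C(n, k.+1) ->
  (2 * 'C(n, k.-1) + xm) * (2 * 'C(n, k.+1) + xp) <= (2 * 'C(n, k) + x) ^ 2.
Proof.
case: k => // k _ kn /=; set u := n - k.+1.
set Cm := 'C(n, k); set C0 := 'C(n, k.+1); set Cp := 'C(n, k.+2) => hm hp.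
have binm : k.+1 * C0 = u.+1 * Cm by rewrite mul_bin_left; congr (_ * _); lia.
have binp : k.+2 * Cp = u * C0 by exact: mul_bin_left.
(* C(n,k+1)^2 (k+1) u = C(n,k) C(n,k+2) (k+2) (u+1), and this ratio absorbs the
   factor (1 + 1/2n)^2 that the perturbations can contribute. *)
have ratio : (2 * n + 1) ^ 2 * (k.+1 * u) <= 4 * n ^ 2 * (k.+2 * u.+1).
  have : k.+1 + u = n by rewrite /u; lia.
  move=> <-; nia.
have perturb : n ^ 2 * ((2 * Cm + xm) * (2 * Cp + xp)) <= (2 * n + 1) ^ 2 * (Cm * Cp).
  have -> : n ^ 2 * ((2 * Cm + xm) * (2 * Cp + xp)) =
            (2 * n * Cm + n * xm) * (2 * n * Cp + n * xp) by ring.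
  have -> : (2 * n + 1) ^ 2 * (Cm * Cp) = ((2 * n + 1) * Cm) * ((2 * n + 1) * Cp) by ring.
  apply: leq_mul; lia.
have n0 : 0 < n by lia.
suff : k.+2 * u.+1 * (n ^ 2 * ((2 * Cm + xm) * (2 * Cp + xp))) <=
       k.+2 * u.+1 * (n ^ 2 * (2 * C0 + x) ^ 2).
  by rewrite leq_pmul2l ?muln_gt0 // leq_pmul2l ?expn_gt0 ?n0.
apply: leq_trans (leq_mul (leqnn _) perturb) _.
have -> : k.+2 * u.+1 * ((2 * n + 1) ^ 2 * (Cm * Cp)) =
          (2 * n + 1) ^ 2 * (k.+1 * u) * (C0 * C0).
  have -> : k.+2 * u.+1 * ((2 * n + 1) ^ 2 * (Cm * Cp)) =
            (2 * n + 1) ^ 2 * ((u.+1 * Cm) * (k.+2 * Cp)) by ring.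
  rewrite -binm binp; ring.
apply: leq_trans (leq_mul ratio (leqnn _)) _; nia.
Qed.

Lemma bin_mid (n t : nat) : n = t.*2.+1 -> 'C(n, t.+1) = 'C(n, t).
Proof. by move=> nE; rewrite -bin_sub; [congr 'C(_, _)|]; lia. Qed.

Section PerturbedBinomial.
Variables (n m : nat) (a x : nat -> nat).
Hypothesis aE : forall t, m <= t -> a t = 2 * 'C(n, t) + x t.
Hypothesis x_small : forall t, m <= t -> t <= n -> n * x t <= 'C(n, t).

Let a_up t : m <= t -> t.*2.+2 <= n -> a t <= a t.+1.
Proof.
move=> mt tn; rewrite !aE //; last lia.
by apply: perturbed_bin_up; rewrite // x_small //; lia.
Qed.

Let a_down t : m <= t -> n <= t.*2 -> t < n -> a t.+1 <= a t.
Proof.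
move=> mt tn tn'; rewrite !aE //; last lia.
by apply: perturbed_bin_down; rewrite // x_small //; lia.
Qed.

Let a_mid t : m <= t -> n = t.*2.+1 -> a t.+1 + x t = a t + x t.+1.
Proof. by move=> mt nE; rewrite !aE //; last lia; rewrite (bin_mid nE); lia. Qed.

Lemma perturbed_bin_unimodal :
  unimodal_mode a m n n./2 \/ unimodal_mode a m n (uphalf n).
Proof.
have [le_x|lt_x] := leqP (x n./2.+1) (x n./2); [left|right]; split.
- by move=> t mt th; apply: a_up; lia.
- move=> t mt th tn; have [nE|nE] := eqVneq n t.*2.+1; last by apply: a_down; lia.
  have tE : t = n./2 by rewrite nE; lia.
  by move: le_x; rewrite -tE; have := a_mid mt nE; lia.
- move=> t mt th; have [nE|nE] := eqVneq n t.*2.+1; last by apply: a_up; rewrite uphalf_half in th; lia.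
  have tE : t = n./2 by rewrite nE; lia.
  by move: lt_x; rewrite -tE; have := a_mid mt nE; lia.
- by move=> t mt th tn; apply: a_down; rewrite // uphalf_half in th; lia.
Qed.

Lemma perturbed_bin_log_concave : log_concave a m n.
Proof.
move=> k mk kn; rewrite !aE //; try lia.
by apply: perturbed_bin_log_concave_step; rewrite ?x_small //; lia.
Qed.

End PerturbedBinomial.

Definition num_mixed_indep (n : nat) (g : bigraph n) (t : nat) : nat :=
  \sum_(A : {set 'I_n}) \sum_(B : {set 'I_n})
     [&& 0 < #|A|, 0 < #|B|, #|A| + #|B| == t & indep_set g (A, B)].

Lemma sum_card_eq_bin (n t : nat) : \sum_(B : {set 'I_n}) (#|B| == t) = 'C(n, t).
Proof.
rewrite -[n in 'C(n, _)]card_ord -card_draws -sum1_card [RHS]big_mkcond /=.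
by apply: eq_bigr => B _; rewrite inE; case: eqP.
Qed.

Lemma indep_set_cards0l (n : nat) (g : bigraph n) (A B : {set 'I_n}) :
  #|A| = 0 -> indep_set g (A, B).
Proof. by move/cards0_eq->; apply/forall_inP => i; rewrite inE. Qed.

Lemma indep_set_cards0r (n : nat) (g : bigraph n) (A B : {set 'I_n}) :
  #|B| = 0 -> indep_set g (A, B).
Proof. by move/cards0_eq->; apply/forall_inP => i _; apply/forall_inP => j; rewrite inE. Qed.

Lemma num_indepE (n : nat) (g : bigraph n) (t : nat) : 0 < t ->
  num_indep g t = 2 * 'C(n, t) + num_mixed_indep g t.
Proof.
move=> t_gt0; have t_neq0 : (0 == t) = false by case: t t_gt0.
have splitE (A B : {set 'I_n}) : indep_set g (A, B) && (#|A| + #|B| == t) =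
    (#|A| == 0) * (#|B| == t) + (#|B| == 0) * (#|A| == t) +
    [&& 0 < #|A|, 0 < #|B|, #|A| + #|B| == t & indep_set g (A, B)] :> nat.
  case: (posnP #|A|) => [A0|A_gt0]; case: (posnP #|B|) => [B0|B_gt0].
  - by rewrite A0 B0 indep_set_cards0l // addn0 t_neq0.
  - by rewrite A0 indep_set_cards0l //= add0n mul1n mul0n !addn0.
  - by rewrite B0 indep_set_cards0r //= addn0 mul0n mul1n add0n addn0.
  - by rewrite !mul0n !add0n /= andbC.
rewrite /num_indep -sum1_card big_mkcond /=.
transitivity (\sum_(A : {set 'I_n}) \sum_(B : {set 'I_n})
                nat_of_bool (indep_set g (A, B) && (#|A| + #|B| == t))).
  by rewrite pair_big /=; apply: eq_bigr => -[A B] _; rewrite inE; case: (_ && _).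
under eq_bigr => A _ do under eq_bigr => B _ do rewrite splitE.
under eq_bigr => A _ do rewrite 2!big_split /=.
rewrite 2!big_split /= mul2n -addnn; congr (_ + _ + _).
- under eq_bigr => A _ do rewrite -big_distrr /=.
  by rewrite -big_distrl /= !sum_card_eq_bin bin0 mul1n.
- rewrite exchange_big /=; under eq_bigr => B _ do rewrite -big_distrr /=.
  by rewrite -big_distrl /= !sum_card_eq_bin bin0 mul1n.
Qed.

Lemma bin_le_expn (n a : nat) : 'C(n, a) <= n ^ a.
Proof.
elim: a => [|a IHa]; first by rewrite bin0.
rewrite expnS; apply: leq_trans (leq_mul (leq_subr a n) IHa).
by rewrite -mul_bin_left leq_pmull.
Qed.

Lemma bin_le_expn_binD (n a b : nat) : b + a <= n -> 'C(n, b) <= n ^ a * 'C(n, b + a).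
Proof.
elim: a => [|a IHa] ban; first by rewrite addn0 mul1n.
apply: leq_trans (IHa _) _; first lia.
rewrite expnS addnS -mulnA mulnCA leq_mul2l; apply/orP; right.
apply: leq_trans (_ : (n - (b + a)) * 'C(n, b + a) <= _); first by rewrite leq_pmull //; lia.
by rewrite -mul_bin_left leq_mul2r; apply/orP; right; lia.
Qed.

Lemma bin_mul_le (n a b : nat) : a + b <= n ->
  'C(n, a) * 'C(n, b) <= n ^ (2 * a) * 'C(n, a + b).
Proof.
move=> abn; rewrite mul2n -addnn expnD -mulnA.
by apply: leq_mul (bin_le_expn n a) _; rewrite addnC; apply: bin_le_expn_binD; lia.
Qed.

Local Open Scope ring_scope.

Lemma sum_set_card (R : pzSemiRingType) (n : nat) (F : nat -> R) :
  \sum_(A : {set 'I_n}) F #|A| = \sum_(a < n.+1) 'C(n, a)%:R * F a.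
Proof.
rewrite (partition_big (fun A : {set 'I_n} => inord #|A| : 'I_n.+1) xpredT) //=.
apply: eq_bigr => a _.
have inord_card (A : {set 'I_n}) : (inord #|A| : 'I_n.+1) = #|A| :> nat.
  by rewrite inordK // ltnS; apply: leq_trans (max_card _) _; rewrite card_ord.
rewrite (eq_bigr (fun _ => F a)); last by move=> A /= /eqP <-; rewrite inord_card.
rewrite sumr_const mulr_natl -[n in 'C(n, _)]card_ord -card_draws; congr (_ *+ _).
by apply: eq_card => A; rewrite !inE unfold_in /= inord_card.
Qed.

Section GnnpWeight.
Variables (R : realType) (n : nat) (p : R).

Lemma sum_gnnp_weight : \sum_(g : bigraph n) gnnp_weight p g = 1.
Proof.
rewrite /gnnp_weight -(bigA_distr_bigA (fun _ (b : bool) => if b then p else 1 - p)) /=.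
by apply: big1 => e _; rewrite big_bool /= addrC subrK.
Qed.

Hypothesis p01 : 0 <= p <= 1.

Lemma gnnp_weight_ge0 (g : bigraph n) : 0 <= gnnp_weight p g.
Proof.
by case/andP: p01 => p0 p1; apply: prodr_ge0 => e _; case: (g e); rewrite ?subr_ge0.
Qed.

Lemma gnnp_markov (P : pred (bigraph n)) (Z : bigraph n -> R) :
  (forall g, 0 <= Z g) -> (forall g, P g -> 1 <= Z g) ->
  \sum_(g | P g) gnnp_weight p g <= \sum_g gnnp_weight p g * Z g.
Proof.
move=> Z_ge0 Z_ge1; rewrite [leRHS](bigID P) /= -[leLHS]addr0.
apply: lerD; last by apply: sumr_ge0 => g _; rewrite mulr_ge0 ?gnnp_weight_ge0.
apply: ler_sum => g Pg.
by rewrite -[leLHS]mulr1 ler_wpM2l ?gnnp_weight_ge0 ?Z_ge1.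
Qed.

Lemma gnnp_prob_ge (P Q : pred (bigraph n)) : (forall g, Q g -> P g) ->
  1 - \sum_(g | ~~ Q g) gnnp_weight p g <= gnnp_prob p P.
Proof.
move=> QP; rewrite -{1}sum_gnnp_weight (bigID Q) /= addrK /gnnp_prob.
rewrite big_mkcond [leRHS]big_mkcond; apply: ler_sum => g _.
by case: (boolP (Q g)) => [/QP -> | _] //; case: (P g); rewrite ?gnnp_weight_ge0.
Qed.

End GnnpWeight.

Section Expectation.
Variables (R : realType) (n : nat) (p : R).

(* The independence indicator is a product of non-edge indicators over A x B,
   so its expectation factorises. *)
Lemma sum_gnnp_weight_indep (A B : {set 'I_n}) :
  \sum_(g : bigraph n) gnnp_weight p g * (indep_set g (A, B))%:R
  = (1 - p) ^+ (#|A| * #|B|).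
Proof.
have indepE (g : bigraph n) : (indep_set g (A, B))%:R =
   \prod_(e : 'I_n * 'I_n) (if (e.1 \in A) && (e.2 \in B) then (~~ g e)%:R else 1 : R).
  case: (boolP (indep_set g (A, B))) => [indep|].
    rewrite big1 // => -[i j] _ /=; case: ifP => // /andP [iA jB].
    by move/forall_inP: indep => /(_ _ iA) /forall_inP /(_ _ jB) /= ->.
  move/forall_inPn => [i iA /forall_inPn [j jB /negPn gij]].
  by rewrite (bigD1 (i, j)) //= iA jB gij /= mul0r.
under eq_bigr => g _ do rewrite indepE /gnnp_weight -big_split /=.
rewrite -(bigA_distr_bigA (fun (e : 'I_n * 'I_n) (b : bool) =>
   (if b then p else 1 - p) * (if (e.1 \in A) && (e.2 \in B) then (~~ b)%:R else 1 : R))) /=.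
under eq_bigr => e _ do rewrite big_bool /=.
rewrite (eq_bigr (fun e : 'I_n * 'I_n => if (e.1 \in A) && (e.2 \in B) then 1 - p else 1));
  last by move=> e _; case: ifP => _; rewrite /= ?mulr0 ?mulr1 ?add0r // addrC subrK.
rewrite -big_mkcond prodr_const -cardsX; congr (_ ^+ _).
by apply: eq_card => -[i j]; rewrite finset.in_setX.
Qed.

Lemma sum_gnnp_weight_mixed (t : nat) :
  \sum_(g : bigraph n) gnnp_weight p g * (num_mixed_indep g t)%:R =
  \sum_(A : {set 'I_n}) \sum_(B : {set 'I_n})
    [&& 0 < #|A|, 0 < #|B| & #|A| + #|B| == t]%N%:R * (1 - p) ^+ (#|A| * #|B|).
Proof.
under eq_bigr => g _ do rewrite natr_sum mulr_sumr.
rewrite exchange_big; apply: eq_bigr => A _.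
under eq_bigr => g _ do rewrite natr_sum mulr_sumr.
rewrite exchange_big; apply: eq_bigr => B _.
case: (0 < #|A|)%N; case: (0 < #|B|)%N; case: (#|A| + #|B| == t)%N;
  rewrite /= ?mul1r ?mul0r; first exact: sum_gnnp_weight_indep.
all: by apply: big1 => g _; rewrite mulr0.
Qed.

End Expectation.

Section MixedSum.
Variables (R : realType) (n L t : nat) (q : R).
Hypotheses (q01 : 0 <= q <= 1) (small : n%:R ^+ 2 * q ^+ L <= 1).
Hypotheses (Lt : (L.*2 <= t)%N) (tn : (t <= n)%N).

Let q0 : 0 <= q. Proof. by case/andP: q01. Qed.
Let q1 : q <= 1. Proof. by case/andP: q01. Qed.

Let mixed_term_le_sorted (a b : nat) : (0 < a)%N -> (a <= b)%N -> (a + b = t)%N ->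
  'C(n, a)%:R * ('C(n, b)%:R * q ^+ (a * b)) <= 'C(n, t)%:R * (n%:R ^+ 2 * q ^+ L).
Proof.
move=> a_gt0 ab abt; have Lb : (L <= b)%N by lia.
rewrite mulrA -natrM; apply: le_trans (_ : (n ^ (2 * a) * 'C(n, t))%:R * q ^+ (a * L) <= _).
  apply: ler_pM; rewrite ?exprn_ge0 // ?ler_nat; first by rewrite -abt bin_mul_le; lia.
  by apply: ler_wiXn2l => //; rewrite leq_mul2l Lb orbT.
have -> : (n ^ (2 * a) * 'C(n, t))%:R * q ^+ (a * L) =
          'C(n, t)%:R * (n%:R ^+ 2 * q ^+ L) ^+ a :> R.
  by rewrite natrM natrX exprMn -!exprM (mulnC L a) mulnC; ring.
by rewrite ler_wpM2l // ler_iXnr // mulr_ge0 ?exprn_ge0.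
Qed.

Lemma mixed_term_le (a b : nat) :
  'C(n, a)%:R * ('C(n, b)%:R * ([&& 0 < a, 0 < b & a + b == t]%N%:R * q ^+ (a * b)))
  <= 'C(n, t)%:R * (n%:R ^+ 2 * q ^+ L).
Proof.
have [/and3P [a_gt0 b_gt0 /eqP abt]|_] := boolP [&& 0 < a, 0 < b & a + b == t]%N; last first.
  by rewrite mul0r !mulr0 mulr_ge0 ?mulr_ge0 ?exprn_ge0.
rewrite mul1r; have [ab|ba] := leqP a b; first exact: mixed_term_le_sorted.
by rewrite mulrCA mulnC; apply: mixed_term_le_sorted; lia.
Qed.

Lemma sum_mixed_le :
  \sum_(A : {set 'I_n}) \sum_(B : {set 'I_n})
    [&& 0 < #|A|, 0 < #|B| & #|A| + #|B| == t]%N%:R * q ^+ (#|A| * #|B|)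
  <= n.+1%:R ^+ 2 * ('C(n, t)%:R * (n%:R ^+ 2 * q ^+ L)).
Proof.
pose G a b : R := [&& 0 < a, 0 < b & a + b == t]%N%:R * q ^+ (a * b).
under eq_bigr => A _ do rewrite (sum_set_card n (G #|A|)).
rewrite (sum_set_card n (fun a => \sum_(b < n.+1) 'C(n, b)%:R * G a b)).
apply: le_trans (_ : \sum_(a < n.+1) \sum_(b < n.+1) 'C(n, t)%:R * (n%:R ^+ 2 * q ^+ L) <= _).
  by apply: ler_sum => a _; rewrite mulr_sumr; apply: ler_sum => b _; apply: mixed_term_le.
by rewrite !sumr_const card_ord -mulrnA mulnn -[n.+1%:R ^+ 2]natrX [leRHS]mulr_natl.
Qed.

End MixedSum.

Definition few_mixed_indep (n m : nat) (g : bigraph n) : bool :=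
  [forall t : 'I_n.+1, (m <= t)%N ==> (n * num_mixed_indep g t <= 'C(n, t))%N].

Lemma few_mixed_indep_shape (n m : nat) (g : bigraph n) :
  (0 < m)%N -> few_mixed_indep m g ->
  (unimodal_mode (num_indep g) m n n./2 \/ unimodal_mode (num_indep g) m n (uphalf n)) /\
  log_concave (num_indep g) m n.
Proof.
move=> m_gt0 /forallP few.
have aE t : (m <= t)%N -> num_indep g t = (2 * 'C(n, t) + num_mixed_indep g t)%N.
  by move=> mt; apply: num_indepE; lia.
have x_small t : (m <= t)%N -> (t <= n)%N -> (n * num_mixed_indep g t <= 'C(n, t))%N.
  by move=> mt tn; have := few (Ordinal (tn : t < n.+1)%N); rewrite /= mt.
split; [exact: perturbed_bin_unimodal aE x_small | exact: perturbed_bin_log_concave aE x_small].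
Qed.

Lemma gnnp_many_mixed_indep_le (R : realType) (n m L : nat) (p : R) :
  0 <= p <= 1 -> n%:R ^+ 2 * (1 - p) ^+ L <= 1 -> (L.*2 <= m)%N ->
  \sum_(g : bigraph n | ~~ few_mixed_indep m g) gnnp_weight p g
    <= n.+1%:R ^+ 4 * (n%:R ^+ 2 * (1 - p) ^+ L).
Proof.
move=> p01 small Lm; set r := n%:R ^+ 2 * (1 - p) ^+ L.
have q01 : 0 <= 1 - p <= 1 by case/andP: p01 => p0 p1; rewrite subr_ge0 p1 gerBl.
have r0 : 0 <= r by case/andP: q01 => q0 _; rewrite mulr_ge0 ?exprn_ge0.
have nr0 : 0 <= n.+1%:R ^+ 2 * r by rewrite mulr_ge0 // exprn_ge0.
have C_gt0 (t : 'I_n.+1) : 0 < 'C(n, t)%:R :> R by rewrite ltr0n bin_gt0 -ltnS.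
pose Z (g : bigraph n) : R :=
  \sum_(t < n.+1 | (m <= t)%N) n%:R / 'C(n, t)%:R * (num_mixed_indep g t)%:R.
apply: le_trans (gnnp_markov p01 (Z := Z) _ _) _.
- by move=> g; apply: sumr_ge0 => t _; rewrite mulr_ge0 ?divr_ge0.
- move=> g /forallPn [t]; rewrite negb_imply -ltnNge => /andP [mt many].
  rewrite /Z (bigD1 t) //= -[leLHS]addr0; apply: lerD.
    by rewrite mulrAC ler_pdivlMr // mul1r -natrM ler_nat ltnW.
  by apply: sumr_ge0 => i _; rewrite mulr_ge0 ?divr_ge0.
rewrite /Z; under eq_bigr => g _ do rewrite mulr_sumr.
rewrite exchange_big /=.
apply: le_trans (_ : \sum_(t < n.+1 | (m <= t)%N) n%:R * (n.+1%:R ^+ 2 * r) <= _).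
  apply: ler_sum => t mt.
  under eq_bigr => g _ do rewrite mulrCA.
  rewrite -mulr_sumr sum_gnnp_weight_mixed.
  have tn : (t <= n)%N by rewrite -ltnS.
  apply: le_trans (_ : n%:R / 'C(n, t)%:R * (n.+1%:R ^+ 2 * ('C(n, t)%:R * r)) <= _).
    apply: ler_wpM2l; first by rewrite divr_ge0.
    exact: sum_mixed_le q01 small (leq_trans Lm mt) tn.
  have -> : n%:R / 'C(n, t)%:R * (n.+1%:R ^+ 2 * ('C(n, t)%:R * r)) =
            n%:R * (n.+1%:R ^+ 2 * r) by field; exact: lt0r_neq0.
  done.
apply: le_trans (_ : \sum_(t < n.+1) n%:R * (n.+1%:R ^+ 2 * r) <= _).
  rewrite [leRHS](bigID (fun t : 'I_n.+1 => m <= t)%N) /= lerDl.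
  by apply: sumr_ge0 => t _; rewrite mulr_ge0.
rewrite sumr_const card_ord -[_ *+ n.+1]mulr_natl.
rewrite (_ : n.+1%:R ^+ 4 * r = n.+1%:R * (n.+1%:R * (n.+1%:R ^+ 2 * r))); last by ring.
by apply: ler_wpM2l => //; apply: ler_wpM2r; rewrite ?ler_nat.
Qed.

Lemma sqrtr_ge_id (R : rcfType) (x : R) : 0 <= x -> x <= 1 -> x <= Num.sqrt x.
Proof.
move=> x0 x1; rewrite -{1}(sqr_sqrtr x0) expr2 ler_piMl ?sqrtr_ge0 //.
by rewrite -sqrtr1 ler_wsqrtr.
Qed.

Lemma nonedge_expn_le (R : realType) (eps M p : R) (n : nat) :
  0 < eps -> M * eps = 20 -> (0 < n)%N -> 0 <= p <= 1 ->
  M * Num.sqrt (ln n%:R / n%:R) <= p ->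
  (1 - p) ^+ (Num.truncn (eps * n%:R))./2 * n%:R ^+ 10 <= expR 1.
Proof.
move=> eps_gt0 Meps n_gt0 /andP [p0 p1] p_large.
set m := Num.truncn (eps * n%:R); set L := m./2; set x : R := n%:R.
have x1 : 1 <= x by rewrite ler1n.
have x0 : 0 < x by apply: lt_le_trans x1.
have lnx0 : 0 <= ln x := ln_ge0 x1.
have lnx_le : ln x <= x by have := @le_ln1Dx R (x - 1); rewrite [1 + _]addrC subrK; lra.
have M_gt0 : 0 < M by rewrite -(pmulr_lgt0 _ eps_gt0) Meps.
have lnx_p : M * ln x <= p * x.
  rewrite -ler_pdivrMr // -mulrA; apply: le_trans p_large; apply: ler_wpM2l; first exact: ltW.
  by apply: sqrtr_ge_id; rewrite ?divr_ge0 ?ler_pdivrMr ?mul1r // ltW.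
have m_ge : eps * x - 1 <= m%:R by have := truncnS_gt (eps * x); rewrite -natr1; lra.
have L_ge : m%:R <= 2 * L%:R + 1 :> R.
  rewrite -natrM natr1 ler_nat mul2n -addn1 -{1}(odd_double_half m) addnC.
  by rewrite leq_add2l leq_b1.
have pL : 10 * ln x - 1 <= p * L%:R.
  have : eps * (M * ln x) <= eps * (p * x) by apply: ler_wpM2l => //; exact: ltW.
  rewrite mulrA (mulrC eps) Meps => h.
  have : p * (eps * x - 2) <= p * (2 * L%:R) by apply: ler_wpM2l => //; lra.
  nra.
have nonedge : (1 - p) ^+ L <= expR (- (p * L%:R)).
  rewrite mulrC -mulrN expRM_natl lerXn2r ?nnegrE ?expR_ge0 ?subr_ge0 //.
  by have := expR_ge1Dx (- p); lra.
have x10 : x ^+ 10 = expR (10 * ln x) by rewrite -[10]/(10%:R) expRM_natl lnK // posrE.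
apply: le_trans (ler_wpM2r (exprn_ge0 _ (ltW x0)) nonedge) _.
by rewrite x10 -expRD ler_expR; lra.
Qed.

Lemma tail_bound_le (R : realType) (n : nat) (y delta : R) :
  0 < delta -> 0 <= y -> y * n%:R ^+ 10 <= expR 1 -> 16 * expR 1 / delta + expR 1 < n%:R ->
  n%:R ^+ 2 * y <= 1 /\ n.+1%:R ^+ 4 * (n%:R ^+ 2 * y) <= delta.
Proof.
move=> delta_gt0 y0 y10 n_large.
have e_delta_ge0 : 0 <= 16 * expR 1 / delta by rewrite divr_ge0 ?mulr_ge0 ?expR_ge0 // ltW.
have en : expR 1 < n%:R :> R by apply: le_lt_trans n_large; rewrite lerDr.
have edn : 16 * expR 1 < delta * n%:R.
  by rewrite [delta * _]mulrC -ltr_pdivrMr //; apply: le_lt_trans n_large; rewrite lerDl expR_ge0.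
set x : R := n%:R in y10 en edn *.
have x_gt0 : 0 < x := lt_trans (expR_gt0 1) en.
have x1 : 1 <= x by rewrite ler1n -(ltr0n R).
have powx k l : (k <= l)%N -> x ^+ k <= x ^+ l by apply: ler_weXn2l.
have x7y : x ^+ 7 * y <= expR 1.
  by apply: le_trans y10; rewrite mulrC; apply: ler_wpM2l => //; apply: powx.
have x5 : 0 < x ^+ 5 := exprn_gt0 5 x_gt0.
split.
  rewrite -(ler_pM2r x5) mul1r -mulrA mulrCA -exprD.
  by apply: le_trans (le_trans (ltW en) (powx 1 5 isT)); rewrite mulrC.
have n1x : n.+1%:R ^+ 4 <= 16 * x ^+ 4.
  rewrite (_ : 16 = 2 ^+ 4) -?exprMn; last by rewrite -natrX.
  by apply: lerXn2r; rewrite ?nnegrE ?mulr_ge0 ?(ltW x_gt0) // -natr1 -/x; lra.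
apply: le_trans (_ : 16 * (x ^+ 6 * y) <= _).
  rewrite (_ : 16 * (x ^+ 6 * y) = 16 * x ^+ 4 * (x ^+ 2 * y)); last first.
    by rewrite -mulrA [x ^+ 4 * _]mulrA -exprD.
  by apply: ler_wpM2r => //; rewrite mulr_ge0 // exprn_ge0 // ltW.
rewrite -(ler_pM2r x_gt0); apply: ltW; apply: le_lt_trans edn.
by rewrite -mulrA ler_wpM2l // mulrAC -exprSr.
Qed.

Unset Implicit Arguments.

Theorem mainTheorem2 (R : realType) (eps : R) (p : nat -> R) :
  0 < eps ->
  (forall n, 0 <= p n <= 1) ->
  (forall M : R, 0 < M -> exists N : nat, forall n : nat, (N <= n)%N ->
      M * Num.sqrt (ln n%:R / n%:R) <= p n) ->
  forall delta : R, 0 < delta -> exists N : nat, forall n : nat, (N <= n)%N ->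
    1 - delta <=
    gnnp_prob (p n) (fun g : bigraph n =>
      let m := Num.truncn (eps * n%:R) in
      `[< ((unimodal_mode (num_indep g) m n n./2 \/
            unimodal_mode (num_indep g) m n (uphalf n)) /\
           log_concave (num_indep g) m n) >]).
Proof.
move=> eps_gt0 p01 p_large delta delta_gt0.
have [N0 p_largeN0] := p_large (20 / eps) (divr_gt0 (ltr0n R 20) eps_gt0).
set c : R := expR 1; have c_gt0 : 0 < c := expR_gt0 1.
have c_delta_ge0 : 0 <= 16 * c / delta by rewrite divr_ge0 ?mulr_ge0 // ltW.
exists (maxn (maxn N0 1) (maxn (Num.truncn (1 / eps)).+1 (Num.truncn (16 * c / delta + c)).+1)).
move=> n; rewrite !geq_max => /andP [/andP [nN0 n_gt0] /andP [n_eps n_delta]].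
have {n_eps} n_eps : 1 < eps * n%:R.
  move: n_eps; rewrite truncn_lt_nat ?divr_ge0 ?ltW //.
  by rewrite ltr_pdivrMr // mulrC.
have {n_delta} n_delta : 16 * c / delta + c < n%:R.
  by rewrite -truncn_lt_nat // addr_ge0 // ltW.
set m := Num.truncn (eps * n%:R).
have m_gt0 : (0 < m)%N by rewrite truncn_gt0 ltW.
have tail := nonedge_expn_le eps_gt0 (divfK (lt0r_neq0 eps_gt0) 20) n_gt0 (p01 n) (p_largeN0 n nN0).
have q0 : 0 <= 1 - p n by case/andP: (p01 n) => _; rewrite subr_ge0.
have [small bad_le] := tail_bound_le delta_gt0 (exprn_ge0 _ q0) tail n_delta.
have half_m : (m./2.*2 <= m)%N by rewrite -[leqRHS]odd_double_half leq_addl.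
apply: le_trans (gnnp_prob_ge (Q := few_mixed_indep m) (p01 n) _).
  rewrite lerD2l lerN2; apply: le_trans bad_le.
  exact: gnnp_many_mixed_indep_le (p01 n) small half_m.
by move=> g /(few_mixed_indep_shape m_gt0) shape; apply/asboolP.
Qed.
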